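(* Let $(X,\Gamma)$ be a $(\mu,\nu)$-path system space. For every $\delta\ge0$ there exists $\theta\ge0$ such that for all $\delta$-constricting maps $\pi_A\colon X\to A$ and $\pi_B\colon X\to B$ we have $\operatorname{diam}_A(B)\le\operatorname{diam}_B(A)+\theta$ and $\operatorname{diam}_B(A)\le\operatorname{diam}_A(B)+\theta$.
   Context: A path is a rectifiable continuous map $\alpha\colon[a,b]\to X$ parametrised by arc length; it is a $(\kappa,\lambda)$-quasi-geodesic if $d(\alpha(t),\alpha(t'))\le|t-t'|\le\kappa d(\alpha(t),\alpha(t'))+\lambda$. A $(\mu,\nu)$-path system space $(X,\Gamma)$ is a geodesic metric space $X$ with a collection $\Gamma$ of paths closed under subpaths, such that any two points are joined by an element of $\Gamma$ and every element is a $(\mu,\nu)$-quasi-geodesic. A map $\pi_A\colon X\to A$ onto a subset $A$ is $\delta$-constricting if (CS1) $d(x,\pi_A(x))\le\delta$ for $x\in A$, and (CS2) for all $x,y\in X$ and $\gamma\in\Gamma$ joining $x$ to $y$, if $d(\pi_A(x),\pi_A(y))>\delta$ then $\gamma$ meets $B_X(\pi_A(x),\delta)$ and $B_X(\pi_A(y),\delta)$. $\operatorname{diam}_A(B)=\operatorname{diam}(\pi_A(B))$. *)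

From HB Require Import structures.
From mathcomp Require Import all_boot all_order all_algebra.
From mathcomp Require Import all_classical all_reals ereal.
Set Implicit Arguments. Unset Strict Implicit. Unset Printing Implicit Defensive.
Import Order.TTheory GRing.Theory Num.Theory.
Local Open Scope classical_set_scope.
Local Open Scope ring_scope.

Section Defs.
Variables (R : realType) (X : Type) (d : X -> X -> R).

Definition is_metric : Prop :=
  [/\ forall x, d x x = 0,
      forall x y, d x y = 0 -> x = y,
      forall x y, d x y = d y x &
      forall x y z, d x z <= d x y + d y z].

Definition is_geodesic_space : Prop :=
  forall x y, exists f : R -> X,
    [/\ f 0 = x, f (d x y) = y &
        forall s t, 0 <= s <= d x y -> 0 <= t <= d x y ->
          d (f s) (f t) = `|s - t|].

(* a path: a map defined on the interval [pa, pb] (values outside are irrelevant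
   to every property below, except membership in a path system) *)
Record xpath := XPath { pa : R; pb : R; pf : R -> X }.

Definition curve_length (f : R -> X) (s t : R) : \bar R :=
  ereal_sup [set z : \bar R | exists (n : nat) (p : nat -> R),
     [/\ p 0%N = s, p n = t, (forall i, (i < n)%N -> p i <= p i.+1) &
          z = (\sum_(i < n) d (f (p i)) (f (p i.+1)))%:E]].

Definition is_path (g : xpath) : Prop :=
  [/\ pa g <= pb g,
      (forall t, pa g <= t <= pb g -> forall e : R, 0 < e ->
         exists r : R, 0 < r /\ forall s, pa g <= s <= pb g -> `|s - t| < r ->
           d (pf g s) (pf g t) < e),
      (curve_length (pf g) (pa g) (pb g) < +oo)%E &
      forall s t, pa g <= s -> s <= t -> t <= pb g ->
        curve_length (pf g) s t = (t - s)%:E].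

Definition quasi_geodesic (kappa lambda : R) (g : xpath) : Prop :=
  is_path g /\
  forall t t', pa g <= t <= pb g -> pa g <= t' <= pb g ->
    d (pf g t) (pf g t') <= `|t - t'| /\
    `|t - t'| <= kappa * d (pf g t) (pf g t') + lambda.

Definition joins (g : xpath) (x y : X) : Prop := pf g (pa g) = x /\ pf g (pb g) = y.

Definition path_system_space (mu nu : R) (Gamma : set xpath) : Prop :=
  [/\ is_metric, is_geodesic_space,
      (forall g, Gamma g -> forall a' b', pa g <= a' -> a' <= b' -> b' <= pb g ->
         Gamma (XPath a' b' (pf g))),
      (forall x y, exists2 g, Gamma g & joins g x y) &
      (forall g, Gamma g -> quasi_geodesic mu nu g)].

Definition meets_ball (g : xpath) (p : X) (r : R) : Prop :=
  exists t, pa g <= t <= pb g /\ d p (pf g t) <= r.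

Definition constricting (Gamma : set xpath) (delta : R) (A : set X) (pi : X -> X) : Prop :=
  [/\ forall x, A (pi x),
      (forall x, A x -> d x (pi x) <= delta) &
      forall x y g, Gamma g -> joins g x y -> delta < d (pi x) (pi y) ->
        meets_ball g (pi x) delta /\ meets_ball g (pi y) delta].

Definition diam (S : set X) : \bar R :=
  ereal_sup [set (d x y)%:E | x in S & y in S].

Definition proj_diam (piA : X -> X) (B : set X) : \bar R := diam (piA @` B).

End Defs.

From HB Require Import structures.
From mathcomp Require Import all_boot all_order all_algebra.
From mathcomp Require Import all_classical all_reals ereal.
From mathcomp Require Import lra.
Import Order.TTheory GRing.Theory Num.Theory.
Local Open Scope classical_set_scope.
Local Open Scope ring_scope.

(* Let b1, b2 in B and let g in Gamma join them.  If pi_A b1 and pi_A b2 are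
   far apart, g passes within delta of both, so b1, b2 are far apart as well.
   Applying the constricting property of pi_B to the two halves of g cut at
   any point shows that every point of g lies uniformly close to B, and points
   near B are moved a bounded amount by pi_B.  Hence pi_A b_i is uniformly
   close to pi_B (pi_A b_i), a point of pi_B(A), and the triangle inequality
   compares d(pi_A b1, pi_A b2) with diam_B(A). *)

Lemma diam_le (R : realType) (X : Type) (d : X -> X -> R) (S T : set X) :
  S `<=` T -> (diam d S <= diam d T)%E.
Proof.
move=> ST; apply: ereal_sup_le => _ [x Sx [y Sy <-]].
by exists x; [exact: ST | exists y; [exact: ST | ]].
Qed.

Lemma diam_image_le {R : realType} {X : Type} {d : X -> X -> R}
    {S : set X} {f h : X -> X} {theta : R} :
  (forall x y, S x -> S y -> d (f x) (f y) <= d (h x) (h y) + theta) ->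
  (diam d (f @` S) <= diam d (h @` S) + theta%:E)%E.
Proof.
move=> fh; apply: ge_ereal_sup => _ [_ [x Sx <-] [_ [y Sy <-] <-]].
apply: (@le_trans _ _ ((d (h x) (h y))%:E + theta%:E)%E).
  by rewrite -EFinD lee_fin fh.
apply: leeD2r; apply: ereal_sup_ubound.
by exists (h x); [exists x | exists (h y); [exists y | ]].
Qed.

(* The first summand is the threshold above which b1, b2 are more than
   4 delta apart; the second is twice the bound on d(pi_A b_i, pi_B (pi_A b_i)). *)
Definition proj_diam_const {R : realType} (mu nu delta : R) : R :=
  let M := `|mu| in let N := `|nu| in
  (2 * delta + 4 * M * delta + N)
  + 2 * ((1 + M) * (2 * delta + 3 * M * delta + N) + 2 * delta + N).

Section PathSystem.
Context {R : realType} {X : Type} {d : X -> X -> R} {mu nu : R}.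
Context {Gamma : set (xpath R X)}.
Hypothesis HX : path_system_space d mu nu Gamma.

Let dxx x : d x x = 0. Proof. by case: HX => -[]. Qed.
Let dC x y : d x y = d y x. Proof. by case: HX => -[]. Qed.
Let d_triangle x y z : d x z <= d x y + d y z. Proof. by case: HX => -[]. Qed.

Let d_ge0 x y : 0 <= d x y.
Proof. by have := d_triangle x y x; rewrite dxx dC; lra. Qed.

Let Gamma_sub {g a b} : Gamma g -> pa g <= a -> a <= b -> b <= pb g ->
  Gamma (XPath a b (pf g)).
Proof. by move=> Gg; case: HX => _ _ sub _ _; apply: (sub g Gg). Qed.

Let Gamma_join x y : exists2 g, Gamma g & joins g x y.
Proof. by case: HX. Qed.

Lemma Gamma_dist_inner_le {g s s' t1 t2} : Gamma g ->
  pa g <= s -> s <= t1 -> t1 <= s' -> s <= t2 -> t2 <= s' -> s' <= pb g ->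
  d (pf g t1) (pf g t2) <= `|mu| * d (pf g s) (pf g s') + `|nu|.
Proof.
move=> Gg ha st1 t1s st2 t2s hb.
have [_ qg] : quasi_geodesic d mu nu g by case: HX => _ _ _ _; apply.
have inD u : s <= u -> u <= s' -> pa g <= u <= pb g.
  by move=> su us'; apply/andP; split; lra.
have [le_t12 _] := qg t1 t2 (inD _ st1 t1s) (inD _ st2 t2s).
have [_ le_ss'] := qg s s' (inD _ (lexx _) (le_trans st1 t1s))
                           (inD _ (le_trans st1 t1s) (lexx _)).
have t12 : `|t1 - t2| <= s' - s by rewrite ler_norml; apply/andP; split; lra.
have ss' : `|s - s'| = s' - s by rewrite distrC ger0_norm // subr_ge0; lra.
have : mu * d (pf g s) (pf g s') <= `|mu| * d (pf g s) (pf g s').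
  by rewrite ler_wpM2r // ler_norm.
have := ler_norm nu; lra.
Qed.

Let mu_le {z k : R} : z <= k -> `|mu| * z <= `|mu| * k.
Proof. exact: ler_wpM2l. Qed.

Section Constricting.
Context {delta : R} {B : set X} {piB : X -> X}.
Hypotheses (delta_ge0 : 0 <= delta) (HB : constricting d Gamma delta B piB).

Let piB_in x : B (piB x). Proof. by case: HB. Qed.

Let piB_near {x} : B x -> d x (piB x) <= delta.
Proof. by case: HB => _ + _; apply. Qed.

Let piB_constr {x y g} : Gamma g -> joins g x y -> delta < d (piB x) (piB y) ->
  meets_ball d g (piB x) delta /\ meets_ball d g (piB y) delta.
Proof. by case: HB => _ _; apply. Qed.

Lemma constricting_move_le x y r : B y -> d x y <= r ->
  d x (piB x) <= (1 + `|mu|) * r + 2 * delta + `|nu|.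
Proof.
move=> By xy; have := mu_le xy; have := normr_ge0 nu; have := d_ge0 x y.
have := delta_ge0.
have := mulr_ge0 (normr_ge0 mu) (le_trans (d_ge0 x y) xy).
have [close | far] := lerP (d (piB x) (piB y)) delta.
  have := piB_near By; have := d_triangle x y (piB x).
  have := d_triangle y (piB y) (piB x); have := dC (piB y) (piB x); lra.
have [g Gg [gx gy]] := Gamma_join x y.
have [[s [/andP[ha hb] xs]] _] := piB_constr Gg (conj gx gy) far.
have := Gamma_dist_inner_le Gg (lexx _) (lexx _) (le_trans ha hb) ha hb (lexx _).
rewrite gx gy; have := d_triangle x (pf g s) (piB x).
have := dC (pf g s) (piB x); lra.
Qed.

Lemma constricting_path_near {g b1 b2 t} : Gamma g -> joins g b1 b2 ->
  B b1 -> B b2 -> 4 * delta < d b1 b2 -> pa g <= t -> t <= pb g ->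
  exists2 y, B y & d (pf g t) y <= delta + 3 * `|mu| * delta + `|nu|.
Proof.
move=> Gg [gb1 gb2] Bb1 Bb2 far ht1 ht2; set q := pf g t.
have before : delta < d (piB b1) (piB q) ->
    exists2 s, pa g <= s <= t & d (piB q) (pf g s) <= delta.
  move=> c; have jg : joins (XPath (pa g) t (pf g)) b1 q by [].
  have [_ [s [hs qs]]] := piB_constr (Gamma_sub Gg (lexx _) ht1 ht2) jg c.
  by exists s.
have after : delta < d (piB q) (piB b2) ->
    exists2 s', t <= s' <= pb g & d (piB q) (pf g s') <= delta.
  move=> c; have jg : joins (XPath t (pb g) (pf g)) q b2 by [].
  have [[s' [hs' qs']] _] := piB_constr (Gamma_sub Gg ht1 ht2 (lexx _)) jg c.
  by exists s'.
have := normr_ge0 nu; have := mulr_ge0 (normr_ge0 mu) delta_ge0; have := delta_ge0.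
have := piB_near Bb1; have := piB_near Bb2.
have [c1 | c1] := lerP (d (piB b1) (piB q)) delta;
  have [c2 | c2] := lerP (d (piB q) (piB b2)) delta.
- have := d_triangle b1 (piB b1) b2; have := d_triangle (piB b1) (piB q) b2.
  have := d_triangle (piB q) (piB b2) b2; have := dC (piB b2) b2; lra.
- have [s' /andP[ts' s'b] qs'] := after c2; exists b1 => //.
  have := Gamma_dist_inner_le Gg (lexx _) ht1 ts' (lexx _) (le_trans ht1 ts') s'b.
  have D : d b1 (pf g s') <= 3 * delta.
    have := d_triangle b1 (piB b1) (pf g s').
    have := d_triangle (piB b1) (piB q) (pf g s'); lra.
  by have := mu_le D; rewrite gb1; lra.
- have [s /andP[ha st] qs] := before c1; exists b2 => //.
  have := Gamma_dist_inner_le Gg ha st ht2 (le_trans st ht2) (lexx _) (lexx _).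
  have D : d (pf g s) b2 <= 3 * delta.
    have := d_triangle (pf g s) (piB q) b2; have := d_triangle (piB q) (piB b2) b2.
    have := dC (pf g s) (piB q); have := dC (piB b2) b2; lra.
  by have := mu_le D; rewrite gb2; lra.
- have [s /andP[ha st] qs] := before c1; have [s' /andP[ts' s'b] qs'] := after c2.
  exists (piB q); first exact: piB_in.
  have := Gamma_dist_inner_le Gg ha st ts' (lexx _) (le_trans st ts') s'b.
  have D : d (pf g s) (pf g s') <= 2 * delta.
    have := d_triangle (pf g s) (piB q) (pf g s').
    have := dC (pf g s) (piB q); lra.
  have := mu_le D; have := d_triangle q (pf g s) (piB q).
  have := dC (pf g s) (piB q); lra.
Qed.

Lemma constricting_move_near_path {g b1 b2 t x} : Gamma g -> joins g b1 b2 ->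
  B b1 -> B b2 -> 4 * delta < d b1 b2 -> pa g <= t -> t <= pb g ->
  d x (pf g t) <= delta ->
  d x (piB x) <= (1 + `|mu|) * (2 * delta + 3 * `|mu| * delta + `|nu|)
                 + 2 * delta + `|nu|.
Proof.
move=> Gg jg Bb1 Bb2 far ht1 ht2 xt.
have [y By ty] := constricting_path_near Gg jg Bb1 Bb2 far ht1 ht2.
by apply: constricting_move_le By _; have := d_triangle x (pf g t) y; lra.
Qed.

End Constricting.

Section TwoProjections.
Context {delta : R} {A B : set X} {piA piB : X -> X}.
Hypothesis delta_ge0 : 0 <= delta.
Hypothesis HA : constricting d Gamma delta A piA.
Hypothesis HB : constricting d Gamma delta B piB.

Lemma proj_dist_le b1 b2 : B b1 -> B b2 ->
  d (piA b1) (piA b2) <=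
    d (piB (piA b1)) (piB (piA b2)) + proj_diam_const mu nu delta.
Proof.
move=> Bb1 Bb2; rewrite /proj_diam_const.
have N0 := normr_ge0 nu; have Md0 := mulr_ge0 (normr_ge0 mu) delta_ge0.
have MMd0 := mulr_ge0 (normr_ge0 mu) Md0.
have MN0 := mulr_ge0 (normr_ge0 mu) N0; have d0 := delta_ge0.
have [close | far] :=
  lerP (d (piA b1) (piA b2)) (2 * delta + 4 * `|mu| * delta + `|nu|).
  by have := d_ge0 (piB (piA b1)) (piB (piA b2)); lra.
have [g Gg jg] := Gamma_join b1 b2.
have [_ _ /(_ _ _ _ Gg jg) constrA] := HA.
have [[t1 [/andP[a1 b1'] e1]] [t2 [/andP[a2 b2'] e2]]] :
    meets_ball d g (piA b1) delta /\ meets_ball d g (piA b2) delta.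
  by apply: constrA; lra.
have far_b : 4 * delta < d b1 b2.
  rewrite ltNge; apply/negP => near.
  have := Gamma_dist_inner_le Gg (lexx _) a1 b1' a2 b2' (lexx _).
  case: jg => -> ->; have := mu_le near.
  have := d_triangle (piA b1) (pf g t1) (piA b2).
  have := d_triangle (pf g t1) (pf g t2) (piA b2).
  have := dC (pf g t2) (piA b2); lra.
have := constricting_move_near_path delta_ge0 HB Gg jg Bb1 Bb2 far_b a1 b1' e1.
have := constricting_move_near_path delta_ge0 HB Gg jg Bb1 Bb2 far_b a2 b2' e2.
have := d_triangle (piA b1) (piB (piA b1)) (piA b2).
have := d_triangle (piB (piA b1)) (piB (piA b2)) (piA b2).
have := dC (piB (piA b2)) (piA b2); lra.
Qed.

Lemma proj_diam_le :
  (proj_diam d piA B <= proj_diam d piB A + (proj_diam_const mu nu delta)%:E)%E.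
Proof.
apply: le_trans (diam_image_le proj_dist_le) _.
apply: leeD2r; apply: diam_le => _ [b Bb <-].
by exists (piA b) => //; case: HA.
Qed.

End TwoProjections.
End PathSystem.

Lemma proj_diam_const_ge0 (R : realType) (mu nu delta : R) :
  0 <= delta -> 0 <= proj_diam_const mu nu delta.
Proof.
move=> delta_ge0; rewrite /proj_diam_const.
have := normr_ge0 nu; have := mulr_ge0 (normr_ge0 mu) delta_ge0.
have := mulr_ge0 (normr_ge0 mu) (mulr_ge0 (normr_ge0 mu) delta_ge0).
have := mulr_ge0 (normr_ge0 mu) (normr_ge0 nu); lra.
Qed.

Theorem mainTheorem11 (R : realType) (X : Type) (d : X -> X -> R) (mu nu : R)
    (Gamma : set (xpath R X)) :
  path_system_space d mu nu Gamma ->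
  forall delta : R, 0 <= delta ->
  exists theta : R, 0 <= theta /\
    forall (A B : set X) (piA piB : X -> X),
      constricting d Gamma delta A piA -> constricting d Gamma delta B piB ->
      (proj_diam d piA B <= proj_diam d piB A + theta%:E)%E /\
      (proj_diam d piB A <= proj_diam d piA B + theta%:E)%E.
Proof.
move=> HX delta delta_ge0; exists (proj_diam_const mu nu delta).
split; first exact: proj_diam_const_ge0.
by move=> A B piA piB HA HB; split; apply: (proj_diam_le HX delta_ge0).
Qed.
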